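(* Let $p$ be a prime, $m\ge1$, $q=p^m$, $\omega$ a primitive $q$-th root of unity in $\mathbb C$, and $U_q$ the set of $q$-th roots of unity. Let $k,r\ge0$, and for $t\in[k]$ let $\alpha_t,\alpha_{t,1},\dots,\alpha_{t,r}\in\{0,1,\dots,q-1\}$. Let $\mathcal L'$ be the CSP instance with variables $x_1,\dots,x_k,y_1,\dots,y_r$, all with domain $U_q$, and constraints $x_t=\omega^{\alpha_t}y_1^{\alpha_{t,1}}\cdots y_r^{\alpha_{t,r}}$ for $t\in[k]$. Let $$G'=\{x_t-\omega^{\alpha_t}y_1^{\alpha_{t,1}}\cdots y_r^{\alpha_{t,r}}:t\in[k]\}\cup\{y_j^{q}-1:j\in[r]\}\subseteq\mathbb C[x_1,\dots,x_k,y_1,\dots,y_r].$$ Then $G'$ is a Gröbner basis, with respect to the lexicographic order with $x_1\succ\dots\succ x_k\succ y_1\succ\dots\succ y_r$, of the ideal $\mathtt I(\mathcal L')=\mathbf I(\mathsf{Sol}(\mathcal L'))$; in particular $\langle G'\rangle=\mathbf I(\mathsf{Sol}(\mathcal L'))$.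
   Context: $\mathsf{Sol}(\mathcal L')\subseteq\mathbb C^{k+r}$ is the set of points with all coordinates in $U_q$ satisfying the constraints. $\mathtt I(\mathcal L')$ is the ideal generated by the domain polynomials $z^q-1$ for every variable $z$ and the constraint polynomials; $\mathbf I(S)$ denotes the ideal of all polynomials vanishing on the set $S$. A Gröbner basis of an ideal $I$ for a monomial order is a finite subset $G\subseteq I$ with $\langle\mathrm{LT}(g):g\in G\rangle=\langle\mathrm{LT}(I)\rangle$. Lexicographic order: $x^\alpha\succ x^\beta$ iff the leftmost nonzero entry of $\alpha-\beta$ is positive. *)

From HB Require Import structures.
From mathcomp Require Import all_boot all_algebra.
From mathcomp Require Import reals.
From mathcomp Require Import complex.
From mathcomp Require Import mpoly.
Set Implicit Arguments. Unset Strict Implicit. Unset Printing Implicit Defensive.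
Import GRing.Theory Num.Theory.
Local Open Scope ring_scope.

Definition lex_gt (n : nat) (a b : 'X_{1.. n}) : bool :=
  [exists i : 'I_n,
     [forall j : 'I_n, (j < i)%N ==> (a j == b j)] && (b i < a i)%N].

Definition is_lex_LT (C : comRingType) (n : nat) (f t : {mpoly C[n]}) : Prop :=
  exists2 mo : 'X_{1.. n}, mo \in msupp f &
    (forall mo', mo' \in msupp f -> mo' != mo -> lex_gt mo mo') /\
    t = f@_mo *: 'X_[mo].

Definition ideal_gen (C : comRingType) (n : nat) (S : {mpoly C[n]} -> Prop)
  (f : {mpoly C[n]}) : Prop :=
  exists (N : nat) (g c : 'I_N -> {mpoly C[n]}),
    (forall i, S (g i)) /\ f = \sum_(i < N) c i * g i.

Definition lex_LTs (C : comRingType) (n : nat) (S : {mpoly C[n]} -> Prop)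
  (t : {mpoly C[n]}) : Prop :=
  exists2 f, S f & is_lex_LT f t.

Definition is_lex_groebner (C : comRingType) (n : nat) (G : seq {mpoly C[n]})
  (I : {mpoly C[n]} -> Prop) : Prop :=
  (forall g, g \in G -> I g) /\
  (forall h, ideal_gen (lex_LTs (fun g => g \in G)) h <-> ideal_gen (lex_LTs I) h).

Definition vanishing_ideal (C : comRingType) (n : nat) (S : ('I_n -> C) -> Prop)
  (f : {mpoly C[n]}) : Prop :=
  forall v, S v -> f.@[v] = 0.

Section CSP.
Variables (C : comRingType) (q k r : nat) (w : C).
Variables (a : 'I_k -> 'I_q) (A : 'I_k -> 'I_r -> 'I_q).

Definition xv (t : 'I_k) : 'I_(k + r) := lshift r t.
Definition yv (j : 'I_r) : 'I_(k + r) := rshift k j.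

Definition cons_poly (t : 'I_k) : {mpoly C[k + r]} :=
  'X_(xv t) - (w ^+ a t) *: \prod_(j < r) 'X_(yv j) ^+ A t j.

Definition dom_poly (i : 'I_(k + r)) : {mpoly C[k + r]} := 'X_i ^+ q - 1.

Definition IL_gens (f : {mpoly C[k + r]}) : Prop :=
  (exists i, f = dom_poly i) \/ (exists t, f = cons_poly t).

Definition IL : {mpoly C[k + r]} -> Prop := ideal_gen IL_gens.

Definition SolL (v : 'I_(k + r) -> C) : Prop :=
  (forall i, v i ^+ q = 1) /\
  (forall t, v (xv t) = w ^+ a t * \prod_(j < r) v (yv j) ^+ A t j).

Definition Gprime : seq {mpoly C[k + r]} :=
  [seq cons_poly t | t <- enum 'I_k] ++ [seq dom_poly (yv j) | j <- enum 'I_r].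
End CSP.

From Pilot Require Import Defs.
From mathcomp Require Import all_boot all_algebra.
From mathcomp Require Import reals complex mpoly.
From mathcomp Require Import zify ring.
Import GRing.Theory Num.Theory.
Local Open Scope ring_scope.
Set Implicit Arguments. Unset Strict Implicit.

(* Modulo <G'>, x_t may be replaced by w^(a t) y^(A t) and y_j^q by 1, so every
   monomial is congruent to a scalar multiple of a standard monomial (no x, all
   y-exponents below q), and a non-standard monomial is lex-larger than its
   reduction.  The solutions are parametrised by y in U_q^r, on which the
   standard monomials are distinct characters of (Z/q)^r; by orthogonality of
   characters (which needs q <> 0 in the field) a combination of them vanishing
   on Sol is zero.  So every f vanishing on Sol reduces to 0, which gives
   I(Sol) <= <G'> <= I(L') <= I(Sol).  Finally, a standard lex-leading monomial
   of some f in the ideal would survive this reduction; hence that monomial is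
   divisible by some x_t or y_j^q, the leading terms of G'. *)

Section IdealGen.
Variables (C : comNzRingType) (n : nat).
Implicit Types (S T : {mpoly C[n]} -> Prop) (f g h : {mpoly C[n]}).

Lemma ideal_gen0 S : ideal_gen S 0.
Proof. by exists 0%N, (fun _ => 0), (fun _ => 0); split=> [[]//|]; rewrite big_ord0. Qed.

Lemma ideal_gen_mem S g : S g -> ideal_gen S g.
Proof. by exists 1%N, (fun _ => g), (fun _ => 1); rewrite big_ord1 mul1r. Qed.

Lemma ideal_genD S f g : ideal_gen S f -> ideal_gen S g -> ideal_gen S (f + g).
Proof.
move=> [N1 [g1 [c1 [S1 ->]]]] [N2 [g2 [c2 [S2 ->]]]].
pose join (F1 F2 : _ -> {mpoly C[n]}) (i : 'I_(N1 + N2)) :=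
  match split i with inl i1 => F1 i1 | inr i2 => F2 i2 end.
exists (N1 + N2)%N, (join g1 g2), (join c1 c2); split.
  by move=> i; rewrite /join; case: (split i).
by rewrite big_split_ord /join; congr (_ + _); apply: eq_bigr => i _;
  rewrite ?(unsplitK (inl i)) ?(unsplitK (inr i)).
Qed.

Lemma ideal_genMl S h f : ideal_gen S f -> ideal_gen S (h * f).
Proof.
move=> [N [g [c [Sg ->]]]]; exists N, g, (fun i => h * c i); split=> //.
by rewrite mulr_sumr; apply: eq_bigr => i _; rewrite mulrA.
Qed.

Lemma ideal_gen_sum S (I : Type) (s : seq I) (F : I -> {mpoly C[n]}) :
  (forall i, ideal_gen S (F i)) -> ideal_gen S (\sum_(i <- s) F i).
Proof.
move=> SF; elim: s => [|i s IHs]; first by rewrite big_nil; apply: ideal_gen0.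
by rewrite big_cons; apply: ideal_genD.
Qed.

Lemma ideal_gen_trans S T f :
  (forall g, S g -> ideal_gen T g) -> ideal_gen S f -> ideal_gen T f.
Proof.
by move=> ST [N [g [c [Sg ->]]]]; apply: ideal_gen_sum => i; apply/ideal_genMl/ST.
Qed.

Lemma ideal_gen_vanishing S (P : ('I_n -> C) -> Prop) f :
  (forall g, S g -> vanishing_ideal P g) -> ideal_gen S f -> vanishing_ideal P f.
Proof.
move=> SP [N [g [c [Sg ->]]]] v Pv.
apply: (big_ind (fun p : {mpoly C[n]} => p.@[v] = 0)) => [|p1 p2 v1 v2|i _].
- exact: meval0.
- by rewrite mevalD v1 v2 addr0.
- by rewrite mevalM (SP _ (Sg i) v Pv) mulr0.
Qed.

Definition ideal_congr S f g := ideal_gen S (f - g).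

Lemma ideal_congr_refl S f : ideal_congr S f f.
Proof. by rewrite /ideal_congr subrr; apply: ideal_gen0. Qed.

Lemma ideal_congr_trans S g f h :
  ideal_congr S f g -> ideal_congr S g h -> ideal_congr S f h.
Proof.
by move=> fg gh; have := ideal_genD fg gh; rewrite /ideal_congr addrA subrK.
Qed.

Lemma ideal_congrD S f1 f2 g1 g2 : ideal_congr S f1 g1 -> ideal_congr S f2 g2 ->
  ideal_congr S (f1 + f2) (g1 + g2).
Proof.
by move=> fg1 fg2; have := ideal_genD fg1 fg2; rewrite /ideal_congr opprD addrACA.
Qed.

Lemma ideal_congrM S f1 f2 g1 g2 : ideal_congr S f1 g1 -> ideal_congr S f2 g2 ->
  ideal_congr S (f1 * f2) (g1 * g2).
Proof.
rewrite /ideal_congr => fg1 fg2.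
have -> : f1 * f2 - g1 * g2 = f2 * (f1 - g1) + g1 * (f2 - g2) by ring.
by apply: ideal_genD; apply: ideal_genMl.
Qed.

Lemma ideal_congrZ S c f g : ideal_congr S f g -> ideal_congr S (c *: f) (c *: g).
Proof. by rewrite /ideal_congr -scalerBr -!mul_mpolyC; apply: ideal_genMl. Qed.

Lemma ideal_congrX S f g e : ideal_congr S f g -> ideal_congr S (f ^+ e) (g ^+ e).
Proof.
move=> fg; elim: e => [|e IHe]; first by rewrite !expr0; apply: ideal_congr_refl.
by rewrite !exprS; apply: ideal_congrM.
Qed.

Lemma ideal_congr_prod S (I : Type) (s : seq I) (F G : I -> {mpoly C[n]}) :
  (forall i, ideal_congr S (F i) (G i)) ->
  ideal_congr S (\prod_(i <- s) F i) (\prod_(i <- s) G i).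
Proof.
move=> FG; elim: s => [|i s IHs]; first by rewrite !big_nil; apply: ideal_congr_refl.
by rewrite !big_cons; apply: ideal_congrM.
Qed.

Lemma ideal_congr_sum S (I : Type) (s : seq I) (F G : I -> {mpoly C[n]}) :
  (forall i, ideal_congr S (F i) (G i)) ->
  ideal_congr S (\sum_(i <- s) F i) (\sum_(i <- s) G i).
Proof.
move=> FG; elim: s => [|i s IHs]; first by rewrite !big_nil; apply: ideal_congr_refl.
by rewrite !big_cons; apply: ideal_congrD.
Qed.

End IdealGen.

Section Lex.
Variable n : nat.
Implicit Types m : 'X_{1.. n}.

Lemma lex_gtP m1 m2 (i : 'I_n) :
  (forall j : 'I_n, (j < i)%N -> m1 j = m2 j) -> (m2 i < m1 i)%N -> lex_gt m1 m2.
Proof.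
move=> eq_before lt_i; apply/existsP; exists i; rewrite lt_i andbT.
by apply/forallP => j; apply/implyP => /eq_before ->.
Qed.

Lemma lex_gt_asym m1 m2 : lex_gt m1 m2 -> ~~ lex_gt m2 m1.
Proof.
move=> /existsP [i /andP [/forallP eq1 lt1]]; apply/negP.
move=> /existsP [j /andP [/forallP eq2 lt2]].
case: (ltngtP i j) => [ij|ji|/val_inj eq_ij].
- by move: (implyP (eq2 i) ij) lt1 => /eqP ->; rewrite ltnn.
- by move: (implyP (eq1 j) ji) lt2 => /eqP ->; rewrite ltnn.
- by subst j; move: (ltn_trans lt1 lt2); rewrite ltnn.
Qed.

Lemma lex_gt_irr m : ~~ lex_gt m m.
Proof. by apply/negP => gt_mm; move: (lex_gt_asym gt_mm); rewrite gt_mm. Qed.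

Lemma mnm_first_diff m1 m2 : m1 != m2 ->
  exists i : 'I_n, (forall j : 'I_n, (j < i)%N -> m1 j = m2 j) /\ m1 i != m2 i.
Proof.
move=> ne12; have [i0 ne_i0] : exists i, m1 i != m2 i.
  apply/existsP; apply: contraR ne12 => /existsPn eq12; apply/eqP/mnmP => i.
  by apply/eqP; rewrite -[_ == _]negbK eq12.
have [i ne_i min_i] :=
  @arg_minnP _ i0 (fun i : 'I_n => m1 i != m2 i) (fun i : 'I_n => val i) ne_i0.
exists i; split => // j ji; apply/eqP; apply: contraTT ji => ne_j.
by rewrite -leqNgt; apply: min_i.
Qed.

Lemma lex_gt_mnm0 m : m != 0%MM -> lex_gt m 0%MM.
Proof.
move=> /mnm_first_diff [i [eq_before ne_i]]; apply: (lex_gtP eq_before).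
by rewrite mnm0E lt0n -(mnm0E i).
Qed.

End Lex.

Section LexBinomial.
Variables (C : comNzRingType) (n : nat).

Lemma is_lex_LT_binomial (u v : 'X_{1.. n}) (c : C) :
  lex_gt u v -> is_lex_LT ('X_[u] - c *: 'X_[v]) 'X_[u].
Proof.
move=> gt_uv; set f := _ - _.
have coef_f mo : f@_mo = (u == mo)%:R - c * (v == mo)%:R.
  by rewrite mcoeffB mcoeffZ !mcoeffX.
have v_neq_u : (v == u) = false.
  by apply/negbTE; apply: contraTneq gt_uv => ->; apply: lex_gt_irr.
have coef_u : f@_u = 1 by rewrite coef_f eqxx v_neq_u mulr0 subr0.
exists u; first by rewrite mcoeff_msupp coef_u oner_neq0.
split; last by rewrite coef_u scale1r.
move=> mo; rewrite mcoeff_msupp coef_f => /[swap] ne_mo.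
rewrite [u == mo]eq_sym (negbTE ne_mo) sub0r oppr_eq0.
by case: (v =P mo) => [<-|]; rewrite ?mulr0 ?eqxx.
Qed.

End LexBinomial.

Lemma dvdn_add_subn q x y : (x < q)%N -> (y < q)%N -> (q %| x + (q - y))%N = (x == y).
Proof.
move=> xq yq; apply/idP/eqP => [/dvdnP [c]|->]; last by rewrite subnKC ?dvdnn // ltnW.
by case: c => [|[|c]] /=; nia.
Qed.

Lemma sum_expr_prim_root (R : idomainType) q (z : R) d : q.-primitive_root z ->
  \sum_(x < q) (z ^+ d) ^+ x = if (q %| d)%N then q%:R else 0.
Proof.
move=> z_prim; rewrite (prim_order_dvd z_prim); case: eqP => [->|/eqP ne1].
  by rewrite (eq_bigr (fun=> 1)) => [|x _]; rewrite ?sumr_const ?card_ord ?expr1n.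
have : (z ^+ d - 1) * \sum_(x < q) (z ^+ d) ^+ x = 0.
  by rewrite -subrX1 exprAC (prim_expr_order z_prim) expr1n subrr.
by move/eqP; rewrite mulf_eq0 subr_eq0 (negbTE ne1) => /eqP.
Qed.


Section CSPIdeal.
Variables (C : idomainType) (q k r : nat) (w : C).
Variables (a : 'I_k -> 'I_q) (A : 'I_k -> 'I_r -> 'I_q).
Hypotheses (w_prim : q.-primitive_root w) (q_neq0 : q%:R != 0 :> C).

Local Notation n := (k + r)%N.
Local Notation Poly := {mpoly C[n]}.
Local Notation xv t := (Defs.xv r t).
Local Notation yv j := (Defs.yv k j).
Local Notation cons_poly := (Defs.cons_poly w a A).
Local Notation dom_poly := (@Defs.dom_poly C q k r).
Local Notation G' := (fun g : Poly => g \in Gprime w a A).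
Local Notation Sol := (SolL w a A).
Implicit Types (f g : Poly) (m e : 'X_{1.. n}) (t : 'I_k) (j : 'I_r).

Lemma xv_lt_yv t j : (xv t < yv j)%N.
Proof. by rewrite /= (leq_trans (ltn_ord t)) ?leq_addr. Qed.

Lemma mnm_split_eq m1 m2 : (forall t, m1 (xv t) = m2 (xv t)) ->
  (forall j, m1 (yv j) = m2 (yv j)) -> m1 = m2.
Proof.
move=> eq_x eq_y; apply/mnmP => i.
case: (splitP i) => [t|j] eq_i.
  by have -> : i = xv t by apply: val_inj.
by have -> : i = yv j by apply: val_inj.
Qed.

Lemma mnm1_yv_xv j t : U_(yv j)%MM (xv t) = 0%N.
Proof. by rewrite mnm1E /Defs.xv /Defs.yv eq_rlshift. Qed.

Definition cons_exp t : 'X_{1.. n} := (\sum_(j < r) U_(yv j) *+ A t j)%MM.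

Lemma cons_exp_lt t (i : 'I_n) : (i < k)%N -> cons_exp t i = 0%N.
Proof.
move=> lt_ik; rewrite mnm_sumE big1 // => j _; rewrite mulmnE mnm1E.
by rewrite -val_eqE /= gtn_eqF ?(leq_trans lt_ik) ?leq_addr.
Qed.

Lemma cons_polyE t : cons_poly t = 'X_(xv t) - w ^+ a t *: 'X_[cons_exp t].
Proof. by rewrite /Defs.cons_poly mprodXnE. Qed.

Lemma dom_polyE i : dom_poly i = 'X_[U_(i) *+ q] - 1 *: 'X_[0].
Proof. by rewrite /Defs.dom_poly mpolyXn mpolyX0 scale1r. Qed.

Lemma cons_poly_Gprime t : cons_poly t \in Gprime w a A.
Proof. by rewrite mem_cat (map_f cons_poly) ?mem_enum. Qed.

Lemma dom_poly_Gprime j : dom_poly (yv j) \in Gprime w a A.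
Proof. by rewrite mem_cat (map_f (fun j => dom_poly (yv j))) ?mem_enum ?orbT. Qed.

Lemma congr_xv t : ideal_congr G' 'X_(xv t) (w ^+ a t *: 'X_[cons_exp t]).
Proof. by rewrite /ideal_congr -cons_polyE; apply/ideal_gen_mem/cons_poly_Gprime. Qed.

Lemma congr_yv_expq j : ideal_congr G' ('X_(yv j) ^+ q) 1.
Proof. exact/ideal_gen_mem/dom_poly_Gprime. Qed.

Definition subst_exp m : 'X_{1.. n} :=
  (\sum_(t < k) cons_exp t *+ m (xv t) + \sum_(j < r) U_(yv j) *+ m (yv j))%MM.

Definition subst_coef m : C := \prod_(t < k) (w ^+ a t) ^+ m (xv t).

Lemma subst_congr m : ideal_congr G' 'X_[m] (subst_coef m *: 'X_[subst_exp m]).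
Proof.
rewrite mpolyXE_id big_split_ord /= /subst_exp mpolyXD -!mprodXnE scalerAl.
apply: ideal_congrM; last exact: ideal_congr_refl.
rewrite /subst_coef -scaler_prod; apply: ideal_congr_prod => t.
by rewrite -exprZn; apply/ideal_congrX/congr_xv.
Qed.

Definition modq_exp m : 'X_{1.. n} :=
  [multinom match split i with inl _ => m i | inr _ => (m i %% q)%N end | i < n].

Lemma modq_exp_xv m t : modq_exp m (xv t) = m (xv t).
Proof. by rewrite mnmE /Defs.xv (unsplitK (inl t)). Qed.

Lemma modq_exp_yv m j : modq_exp m (yv j) = (m (yv j) %% q)%N.
Proof. by rewrite mnmE /Defs.yv (unsplitK (inr j)). Qed.

Lemma modq_congr m : ideal_congr G' 'X_[m] 'X_[modq_exp m].
Proof.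
pose quot := (\sum_(j < r) (U_(yv j) *+ q) *+ (m (yv j) %/ q)%N)%MM.
have quot_yv j : quot (yv j) = (m (yv j) %/ q * q)%N.
  rewrite mnm_sumE (bigD1 j) //= big1 => [|j' ne_j'].
    by rewrite !mulmnE mnm1E eqxx mul1n addn0 mulnC.
  by rewrite !mulmnE mnm1E /Defs.yv eq_rshift (negbTE ne_j').
have m_split : m = (quot + modq_exp m)%MM.
  apply: mnm_split_eq => [t|j]; rewrite mnmDE.
    by rewrite modq_exp_xv mnm_sumE big1 // => j _; rewrite !mulmnE mnm1_yv_xv.
  by rewrite modq_exp_yv quot_yv -divn_eq.
rewrite {1}m_split mpolyXD -[X in ideal_congr _ _ X]mul1r -mprodXnE.
apply: ideal_congrM; last exact: ideal_congr_refl.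
apply: (@ideal_congr_trans _ _ _ (\prod_j 1)).
  apply: ideal_congr_prod => j; rewrite -mpolyXn -(expr1n _ (m (yv j) %/ q)%N).
  exact/ideal_congrX/congr_yv_expq.
by rewrite big1_eq; apply: ideal_congr_refl.
Qed.

Definition reduce_exp m : 'X_{1.. n} := modq_exp (subst_exp m).

Definition standard m := [forall t, m (xv t) == 0%N] && [forall j, m (yv j) < q]%N.

Lemma reduce_congr m : ideal_congr G' 'X_[m] (subst_coef m *: 'X_[reduce_exp m]).
Proof. exact/(ideal_congr_trans (subst_congr m))/ideal_congrZ/modq_congr. Qed.

Lemma reduce_exp_xv m t : reduce_exp m (xv t) = 0%N.
Proof.
rewrite modq_exp_xv mnmDE !mnm_sumE !big1 // => ? _.
all: by rewrite mulmnE ?mnm1_yv_xv ?cons_exp_lt ?mul0n /=.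
Qed.

Lemma reduce_exp_standard m : standard (reduce_exp m).
Proof.
apply/andP; split; first by apply/forallP => t; rewrite reduce_exp_xv.
by apply/forallP => j; rewrite modq_exp_yv ltn_pmod ?(prim_order_gt0 w_prim).
Qed.

Lemma subst_exp_id m : (forall t, m (xv t) = 0%N) -> subst_exp m = m.
Proof.
move=> m_xv0; rewrite /subst_exp big1 ?add0m => [|t _]; last by rewrite m_xv0 mulm0n.
rewrite [RHS]multinomUE_id big_split_ord /= [X in _ = (X + _)%MM]big1 ?add0m //.
by move=> t _; rewrite -[lshift r t]/(xv t) m_xv0 mulm0n.
Qed.

Lemma standard_xv m t : standard m -> m (xv t) = 0%N.
Proof. by case/andP => /forallP/(_ t)/eqP. Qed.

Lemma standard_yv m j : standard m -> (m (yv j) < q)%N.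
Proof. by case/andP => _ /forallP. Qed.

Lemma reduce_exp_id m : standard m -> reduce_exp m = m.
Proof.
move=> std_m; rewrite /reduce_exp subst_exp_id => [|t]; last exact: standard_xv.
apply: mnm_split_eq => [t|j]; first by rewrite modq_exp_xv.
by rewrite modq_exp_yv modn_small ?standard_yv.
Qed.

Lemma subst_coef_standard m : standard m -> subst_coef m = 1.
Proof. by move=> std_m; rewrite /subst_coef big1 // => t _; rewrite standard_xv. Qed.

Lemma lex_gt_reduce_exp m : ~~ standard m -> lex_gt m (reduce_exp m).
Proof.
move=> nstd_m; have : m != reduce_exp m.
  by apply: contraNneq nstd_m => ->; apply: reduce_exp_standard.
case/mnm_first_diff => i [eq_before ne_i]; apply: (lex_gtP eq_before).
case: (splitP i) => [t|j] eq_i.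
  have {}eq_i : i = xv t by apply: val_inj.
  by move: ne_i; rewrite eq_i reduce_exp_xv lt0n.
have {}eq_i : i = yv j by apply: val_inj.
have m_xv0 t : m (xv t) = 0%N.
  by rewrite eq_before ?reduce_exp_xv // eq_i xv_lt_yv.
move: ne_i; rewrite eq_i /reduce_exp subst_exp_id // modq_exp_yv.
by rewrite ltn_neqAle leq_mod eq_sym andbT.
Qed.

Lemma expr_prim_root_order d : (w ^+ d) ^+ q = 1.
Proof. by rewrite exprAC (prim_expr_order w_prim) expr1n. Qed.

Definition sol_point (s : {ffun 'I_r -> 'I_q}) (i : 'I_n) : C :=
  match split i with
  | inl t => w ^+ a t * \prod_(j < r) (w ^+ s j) ^+ A t j
  | inr j => w ^+ s j
  end.

Lemma sol_point_xv s t :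
  sol_point s (xv t) = w ^+ a t * \prod_(j < r) (w ^+ s j) ^+ A t j.
Proof. by rewrite /sol_point /Defs.xv (unsplitK (inl t)). Qed.

Lemma sol_point_yv s j : sol_point s (yv j) = w ^+ s j.
Proof. by rewrite /sol_point /Defs.yv (unsplitK (inr j)). Qed.

Lemma sol_pointP s : Sol (sol_point s).
Proof.
split=> [i|t]; last first.
  by rewrite sol_point_xv; congr (_ * _); apply: eq_bigr => j _; rewrite sol_point_yv.
case: (splitP i) => [t|j] eq_i.
  rewrite (_ : i = xv t) ?sol_point_xv; last exact: val_inj.
  rewrite exprMn expr_prim_root_order mul1r -prodrXl big1 // => j _.
  by rewrite (exprAC _ (A t j)) expr_prim_root_order expr1n.
rewrite (_ : i = yv j) ?sol_point_yv; last exact: val_inj.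
exact: expr_prim_root_order.
Qed.

Lemma meval_standard_sol_point s m : standard m ->
  'X_[m].@[sol_point s] = \prod_(j < r) (w ^+ s j) ^+ m (yv j).
Proof.
move=> std_m; rewrite mevalX big_split_ord /= big1 ?mul1r => [|t _].
  by apply: eq_bigr => j _; rewrite -[rshift k j]/(yv j) sol_point_yv.
by rewrite -[lshift r t]/(xv t) standard_xv ?expr0.
Qed.

Lemma standard_eq m e : standard m -> standard e ->
  (forall j, m (yv j) = e (yv j)) -> m = e.
Proof.
move=> std_m std_e eq_yv; apply: mnm_split_eq => // t.
by rewrite !standard_xv.
Qed.

(* Since (w ^+ s) ^+ (q - e) = w ^- (s * e), this is the character conjugate
   to the value of the monomial [e] at [sol_point s]. *)
Definition conj_char e (s : {ffun 'I_r -> 'I_q}) : C :=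
  \prod_(j < r) (w ^+ s j) ^+ (q - e (yv j)).

Lemma standard_orthogonal m e : standard m -> standard e ->
  \sum_(s : {ffun 'I_r -> 'I_q}) 'X_[m].@[sol_point s] * conj_char e s
  = if m == e then q%:R ^+ r else 0.
Proof.
move=> std_m std_e.
under eq_bigr => s _.
  rewrite meval_standard_sol_point // /conj_char -big_split /=.
  under eq_bigr => j _ do rewrite -exprD exprAC.
over.
rewrite -(bigA_distr_bigA (fun j (x : 'I_q) =>
                            (w ^+ (m (yv j) + (q - e (yv j)))) ^+ x)) /=.
under eq_bigr => j _ do rewrite sum_expr_prim_root // dvdn_add_subn ?standard_yv //.
case: eqP => [->|ne_me].
  by under eq_bigr do rewrite eqxx; rewrite prodr_const card_ord.
have [j ne_j] : exists j, m (yv j) != e (yv j).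
  apply/existsP; apply: contra_notT ne_me => /existsPn eq_yv.
  by apply: standard_eq => // j; apply/eqP; rewrite -[_ == _]negbK eq_yv.
by rewrite (bigD1 j) //= (negbTE ne_j) mul0r.
Qed.

Lemma standard_vanishing_eq0 g :
  {subset msupp g <= standard} -> vanishing_ideal Sol g -> g = 0.
Proof.
move=> std_g van_g; apply/mpolyP => e; rewrite mcoeff0.
have [supp_e|] := boolP (e \in msupp g); last exact: memN_msupp_eq0.
have term m : m \in msupp g ->
    \sum_s (g@_m *: 'X_[m]).@[sol_point s] * conj_char e s =
    g@_m * (if m == e then q%:R ^+ r else 0).
  move=> supp_m.
  rewrite -(standard_orthogonal (std_g _ supp_m) (std_g _ supp_e)) mulr_sumr.
  by apply: eq_bigr => s _; rewrite mevalZ mulrA.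
have : \sum_s g.@[sol_point s] * conj_char e s = g@_e * q%:R ^+ r.
  under eq_bigr => s _ do rewrite {1}(mpolyE g) raddf_sum mulr_suml.
  rewrite exchange_big /= big_seq (eq_bigr _ term) -big_seq.
  rewrite (bigD1_seq e) ?msupp_uniq //= eqxx big1 ?addr0 // => m ne_me.
  by rewrite (negbTE ne_me) mulr0.
rewrite big1 => [|s _]; last by rewrite (van_g _ (sol_pointP s)) mul0r.
by move/esym/eqP; rewrite mulf_eq0 expf_eq0 (negbTE q_neq0) andbF orbF => /eqP.
Qed.

Definition reduce_poly f : Poly :=
  \sum_(m <- msupp f) (f@_m * subst_coef m) *: 'X_[reduce_exp m].

Lemma reduce_poly_congr f : ideal_congr G' f (reduce_poly f).
Proof.
rewrite {1}(mpolyE f); apply: ideal_congr_sum => m.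
by rewrite -scalerA; apply/ideal_congrZ/reduce_congr.
Qed.

Lemma mcoeff_reduce_poly f e : (reduce_poly f)@_e =
  \sum_(m <- msupp f) f@_m * subst_coef m * (reduce_exp m == e)%:R.
Proof. by rewrite raddf_sum; apply: eq_bigr => m _; rewrite /= mcoeffZ mcoeffX. Qed.

Lemma msupp_reduce_poly f : {subset msupp (reduce_poly f) <= standard}.
Proof.
move=> e; apply: contraTT => nstd_e; rewrite mcoeff_msupp negbK mcoeff_reduce_poly.
rewrite big1 // => m _; case: (reduce_exp m =P e) => [eq_e|_]; last exact: mulr0.
by move/negP: nstd_e; rewrite -eq_e; case; apply: reduce_exp_standard.
Qed.

Lemma IL_gens_vanishing g : IL_gens w a A g -> vanishing_ideal Sol g.
Proof.
case=> [[i ->]|[t ->]] v [v_root v_cons].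
  by rewrite /Defs.dom_poly rmorphB rmorphXn rmorph1 /= mevalXU v_root subrr.
rewrite /Defs.cons_poly rmorphB /= mevalZ rmorph_prod /= mevalXU v_cons.
by under eq_bigr do rewrite rmorphXn /= mevalXU; rewrite subrr.
Qed.

Lemma Gprime_IL_gens g : g \in Gprime w a A -> IL_gens w a A g.
Proof.
rewrite mem_cat => /orP [/mapP [t _ ->]|/mapP [j _ ->]].
  by right; exists t.
by left; exists (yv j).
Qed.

Lemma IL_vanishing f : IL w a A f -> vanishing_ideal Sol f.
Proof. exact/ideal_gen_vanishing/IL_gens_vanishing. Qed.

Lemma Gprime_IL f : ideal_gen G' f -> IL w a A f.
Proof. by apply: ideal_gen_trans => g /Gprime_IL_gens/ideal_gen_mem. Qed.

Lemma vanishing_reduce_poly f : vanishing_ideal Sol f -> reduce_poly f = 0.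
Proof.
move=> van_f; apply: standard_vanishing_eq0; first exact: msupp_reduce_poly.
move=> v Sol_v; have := IL_vanishing (Gprime_IL (reduce_poly_congr f)) Sol_v.
by rewrite mevalB van_f // sub0r => /eqP; rewrite oppr_eq0 => /eqP.
Qed.

Lemma vanishing_Gprime f : vanishing_ideal Sol f -> ideal_gen G' f.
Proof.
move=> van_f; have := reduce_poly_congr f.
by rewrite /ideal_congr vanishing_reduce_poly ?subr0.
Qed.

Lemma mcoeff_reduce_poly_lex_max f e : standard e -> e \in msupp f ->
  (forall m, m \in msupp f -> m != e -> lex_gt e m) -> (reduce_poly f)@_e = f@_e.
Proof.
move=> std_e supp_e e_max; rewrite mcoeff_reduce_poly (bigD1_seq e) ?msupp_uniq //=.
rewrite reduce_exp_id // subst_coef_standard // eqxx !mulr1 big1_seq ?addr0 //.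
move=> m /andP [ne_me supp_m]; case: (reduce_exp m =P e) => [red_m|_]; last exact: mulr0.
have [std_m|nstd_m] := boolP (standard m).
  by move: ne_me; rewrite -red_m reduce_exp_id ?eqxx.
by move: (lex_gt_asym (e_max _ supp_m ne_me)); rewrite -red_m lex_gt_reduce_exp.
Qed.

Lemma lex_LT_IL_nonstandard f e : IL w a A f -> e \in msupp f ->
  (forall m, m \in msupp f -> m != e -> lex_gt e m) -> ~~ standard e.
Proof.
move=> IL_f supp_e e_max; apply/negP => std_e.
move: (mcoeff_reduce_poly_lex_max std_e supp_e e_max).
rewrite (vanishing_reduce_poly (IL_vanishing IL_f)) mcoeff0 => /esym/eqP.
by rewrite mcoeff_eq0 supp_e.
Qed.

Lemma lex_LT_cons_poly t : is_lex_LT (cons_poly t) 'X_(xv t).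
Proof.
rewrite cons_polyE; apply/is_lex_LT_binomial/(lex_gtP (i := xv t)) => [i lt_i|].
  by rewrite mnm1E -val_eqE gtn_eqF // cons_exp_lt // (ltn_trans lt_i (ltn_ord t)).
by rewrite mnm1E eqxx cons_exp_lt //= ltn_ord.
Qed.

Lemma lex_LT_dom_poly j : is_lex_LT (dom_poly (yv j)) 'X_[U_(yv j) *+ q].
Proof.
rewrite dom_polyE; apply/is_lex_LT_binomial/lex_gt_mnm0.
apply: contraTneq (prim_order_gt0 w_prim) => /(congr1 (fun m => m (yv j))).
by rewrite mulmnE mnm1E eqxx mul1n mnm0E => ->.
Qed.

Lemma lex_LTs_Gprime_mul g u e : g \in Gprime w a A -> is_lex_LT g 'X_[u] ->
  (u <= e)%MM -> forall c, ideal_gen (lex_LTs G') (c *: 'X_[e]).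
Proof.
move=> G_g LT_g le_ue c; rewrite -(submK le_ue) mpolyXD scalerAl.
by apply/ideal_genMl/ideal_gen_mem; exists g.
Qed.

Lemma lex_LTs_IL_Gprime h : lex_LTs (IL w a A) h -> ideal_gen (lex_LTs G') h.
Proof.
move=> [f IL_f [e supp_e [e_max ->]]].
have := lex_LT_IL_nonstandard IL_f supp_e e_max.
rewrite negb_and => /orP [/forallPn [t xt_e] | /forallPn [j yj_e]].
  apply: (lex_LTs_Gprime_mul (cons_poly_Gprime t) (lex_LT_cons_poly t)).
  by apply/mnm_lepP => i; rewrite mnm1E; case: eqP => [<-|] //=; rewrite lt0n.
apply: (lex_LTs_Gprime_mul (dom_poly_Gprime j) (lex_LT_dom_poly j)).
apply/mnm_lepP => i; rewrite mulmnE mnm1E.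
by case: eqP => [<-|] //=; rewrite mul1n leqNgt.
Qed.

Theorem Gprime_lex_groebner : is_lex_groebner (Gprime w a A) (IL w a A).
Proof.
split=> [g /ideal_gen_mem/Gprime_IL //|h]; split; apply: ideal_gen_trans => lt.
  move=> [g G_g LT_g]; apply: ideal_gen_mem; exists g => //.
  exact/Gprime_IL/ideal_gen_mem.
exact: lex_LTs_IL_Gprime.
Qed.

End CSPIdeal.

Theorem lemma5p4 (R : realType) (p m q : nat) (hp : prime p) (hm : (0 < m)%N)
  (hq : q = (p ^ m)%N) (w : R[i]) (hw : q.-primitive_root w)
  (k r : nat) (a : 'I_k -> 'I_q) (A : 'I_k -> 'I_r -> 'I_q) :
  (forall f, IL w a A f <-> vanishing_ideal (SolL w a A) f) /\
  is_lex_groebner (Gprime w a A) (IL w a A) /\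
  (forall f, ideal_gen (fun g => g \in Gprime w a A) f <->
             vanishing_ideal (SolL w a A) f).
Proof.
have q_neq0 : q%:R != 0 :> R[i] by rewrite pnatr_eq0 -lt0n (prim_order_gt0 hw).
have V_Gprime := vanishing_Gprime hw q_neq0.
split; [|split; first exact: Gprime_lex_groebner hw q_neq0].
  by move=> f; split=> [/IL_vanishing | /V_Gprime/Gprime_IL].
by move=> f; split=> [/Gprime_IL/IL_vanishing | /V_Gprime].
Qed.
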